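(* Let $G$ be a finite simple graph, $s\geq1$, $e_1,\dots,e_s$ edges of $G$ (repetitions allowed), and $J=(I(G)^{s+1}:e_1\cdots e_s)$. Then $J^{\mathrm{pol}}$ is the edge ideal of the graph $G'$ whose vertex set is $V(G)\cup\{u' : u\in V(G)$ is even-connected to itself with respect to $e_1\cdots e_s\}$ ($u'$ a new vertex) and whose edges are: (1) all edges of $G$; (2) $uv$ for every pair of distinct vertices $u\neq v$ of $G$ that are even-connected with respect to $e_1\cdots e_s$; (3) $uu'$ for every vertex $u$ even-connected to itself with respect to $e_1\cdots e_s$ (so $u'$ has only the neighbor $u$).
   Context: $S=K[x_1,\dots,x_n]$ with the $x_i$ the vertices of $G$, $I(G)=(xy : xy\text{ an edge})$, edges identified with monomials, $(J:m)=\{f: fm\in J\}$; $J$ is generated by degree-2 monomials. Polarization: for an ideal $J\subseteq K[x_1,\dots,x_n]$ generated by quadratic monomials, $J^{\mathrm{pol}}\subseteq K[x_1,\dots,x_n,x_1',\dots,x_n']$ is the ideal generated by all $x_ix_j$ ($i\neq j$) with $x_ix_j\in J$ and all $x_kx_k'$ with $x_k^2\in J$. Even-connection: $u,v$ (possibly equal) are even-connected with respect to $e_1,\dots,e_s$ if there is a sequence of vertices $p_0,\dots,p_{2k+1}$, $k\ge1$ (repeats allowed), with (1) $p_0=u$, $p_{2k+1}=v$; (2) for all $0\le l\le k-1$, $p_{2l+1}p_{2l+2}=e_i$ for some $i$; (3) for every $i$, $|\{l\ge0: p_{2l+1}p_{2l+2}=e_i\}|\le|\{j: e_j=e_i\}|$;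 (4) each $p_rp_{r+1}$, $0\le r\le 2k$, is an edge of $G$. *)

From HB Require Import structures.
From mathcomp Require Import all_boot all_order all_algebra.
From mathcomp Require Import mpoly.
Set Implicit Arguments. Unset Strict Implicit. Unset Printing Implicit Defensive.
Import GRing.Theory.
Local Open Scope ring_scope.

Definition ideal_gen (K : fieldType) (m : nat) (S : {mpoly K[m]} -> Prop)
  (f : {mpoly K[m]}) : Prop :=
  exists r : seq ({mpoly K[m]} * {mpoly K[m]}),
    (forall p, p \in r -> S p.2) /\ f = \sum_(p <- r) p.1 * p.2.

Definition ideal_pow (K : fieldType) (m : nat) (I : {mpoly K[m]} -> Prop)
  (k : nat) : {mpoly K[m]} -> Prop :=
  ideal_gen (fun g => exists fs : seq {mpoly K[m]},
      size fs = k /\ (forall h, h \in fs -> I h) /\ g = \prod_(h <- fs) h).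

Definition colon (K : fieldType) (m : nat) (J : {mpoly K[m]} -> Prop)
  (g : {mpoly K[m]}) : {mpoly K[m]} -> Prop := fun f => J (f * g).

(* Edges are given as ordered pairs of vertices; two pairs denote the same
   edge iff they agree as unordered pairs. *)
Definition same_edge (n : nat) (a b : 'I_n * 'I_n) : bool :=
  ((a.1 == b.1) && (a.2 == b.2)) || ((a.1 == b.2) && (a.2 == b.1)).

Definition edge_mon (K : fieldType) (n : nat) (a : 'I_n * 'I_n) : {mpoly K[n]} :=
  'X_a.1 * 'X_a.2.

Definition edge_ideal (K : fieldType) (n : nat) (G : rel 'I_n) :
  {mpoly K[n]} -> Prop :=
  ideal_gen (fun g => exists u v : 'I_n, G u v /\ g = 'X_u * 'X_v).

Definition even_connected (n s : nat) (G : rel 'I_n) (e : 'I_s -> 'I_n * 'I_n)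
  (u v : 'I_n) : Prop :=
  exists (k : nat) (p : nat -> 'I_n),
    [/\ (1 <= k)%N, p 0%N = u & p (2 * k + 1)%N = v] /\
    [/\ (forall l, (l < k)%N -> exists i : 'I_s,
            same_edge (p (2 * l + 1)%N, p (2 * l + 2)%N) (e i)),
        (forall i : 'I_s,
            (count (fun l => same_edge (p (2 * l + 1)%N, p (2 * l + 2)%N) (e i))
                   (iota 0 k)
             <= #|[set j : 'I_s | same_edge (e j) (e i)]|)%N)
      & (forall r, (r < 2 * k + 1)%N -> G (p r) (p r.+1))].

(* Polarization of a quadratic monomial ideal J of K[x_1..x_n] into
   K[x_1..x_n,x_1'..x_n'] = {mpoly K[n + n]}: x_i is variable lshift n i,
   x_i' is variable rshift n i. *)
Definition polarization (K : fieldType) (n : nat) (J : {mpoly K[n]} -> Prop) :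
  {mpoly K[n + n]} -> Prop :=
  ideal_gen (fun g =>
    (exists i j : 'I_n, [/\ i != j, J ('X_i * 'X_j)
                          & g = 'X_(lshift n i) * 'X_(lshift n j)]) \/
    (exists k : 'I_n, J ('X_k ^+ 2) /\ g = 'X_(lshift n k) * 'X_(rshift n k))).

Definition edge_ideal_G' (K : fieldType) (n s : nat) (G : rel 'I_n)
  (e : 'I_s -> 'I_n * 'I_n) : {mpoly K[n + n]} -> Prop :=
  ideal_gen (fun g =>
    (exists u v : 'I_n, G u v /\ g = 'X_(lshift n u) * 'X_(lshift n v)) \/
    (exists u v : 'I_n, [/\ u != v, even_connected G e u v
                          & g = 'X_(lshift n u) * 'X_(lshift n v)]) \/
    (exists u : 'I_n, even_connected G e u u
                       /\ g = 'X_(lshift n u) * 'X_(rshift n u))).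

From HB Require Import structures.
From mathcomp Require Import all_boot all_order all_algebra.
From mathcomp Require Import mpoly.
From mathcomp Require Import zify.
Set Implicit Arguments. Unset Strict Implicit. Unset Printing Implicit Defensive.
Import GRing.Theory.

(* Membership of x_u x_v e_1 ... e_s in I(G)^(s+1) says that this monomial is
   divisible by a product of s+1 edges of G; as both have degree 2(s+1), the
   endpoints of these edges are, with multiplicity, exactly u, v and the
   endpoints of the e_i.  Such a cover is equivalent to a walk from u to v that
   alternates between edges of G and distinct e_i: follow the covering edge at u,
   then an e_i at its other end, and recurse.  Walks of length at least three are
   the even-connections, walks of length one are the edges of G, and since G has
   no loops, polarization only turns x_u^2 into x_u x_u'. *)

Lemma count_cons_rem (T : eqType) (P : pred T) (t : T) (s : seq T) :
  t \in s -> count P s = P t + count P (rem t s).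
Proof. by move=> ts; rewrite (permP (perm_to_rem ts)). Qed.

Lemma count_enum_card (T : finType) (P : pred T) :
  count P (enum T) = #|[set x | P x]|.
Proof. by rewrite cardsE cardE enumT /enum_mem size_filter. Qed.

Lemma eq_of_leq_sum (I : finType) (F1 F2 : I -> nat) :
  (forall i, F1 i <= F2 i) -> \sum_i F1 i = \sum_i F2 i -> F1 =1 F2.
Proof.
move=> le12 eq12 i; apply/eqP; rewrite eqn_leq le12 -subn_eq0 /=.
have : \sum_i (F2 i - F1 i) == 0 by rewrite sumnB // eq12 subnn.
by rewrite sum_nat_eq0 => /forallP /(_ i) /implyP /(_ isT).
Qed.

Section EdgeMultisets.
Variable n : nat.
Implicit Types (x y z : 'I_n * 'I_n) (L M : seq ('I_n * 'I_n)) (v w : 'I_n).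

Lemma same_edge_refl x : same_edge x x.
Proof. by rewrite /same_edge !eqxx. Qed.

Lemma same_edge_sym x y : same_edge x y = same_edge y x.
Proof.
case: x y => [x1 x2] [y1 y2]; rewrite /same_edge /= ![x1 == _]eq_sym ![x2 == _]eq_sym.
by case: (y1 == x1); case: (y2 == x2); case: (y1 == x2); case: (y2 == x1).
Qed.

Lemma same_edge_trans x y z : same_edge x y -> same_edge y z -> same_edge x z.
Proof.
case: x y z => [x1 x2] [y1 y2] [z1 z2]; rewrite /same_edge /=.
by case/orP=> /andP[/eqP-> /eqP->]; case/orP=> /andP[/eqP-> /eqP->];
  rewrite !eqxx ?orbT.
Qed.

Lemma same_edge_eq x y : same_edge x y -> same_edge x =1 same_edge y.
Proof.
move=> xy z; apply/idP/idP; apply: same_edge_trans => //.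
by rewrite same_edge_sym.
Qed.

Definition ends x v : nat := (x.1 == v) + (x.2 == v).

Definition deg L v : nat := \sum_(x <- L) ends x v.

Lemma same_edge_ends x y : same_edge x y -> ends x =1 ends y.
Proof.
move=> + v; case: x y => [x1 x2] [y1 y2]; rewrite /same_edge /ends /=.
by case/orP=> /andP[/eqP-> /eqP->] //; rewrite addnC.
Qed.

Lemma ends_gt0 x v : 0 < ends x v -> exists w, same_edge (v, w) x.
Proof.
case: x => [x1 x2]; rewrite /ends /same_edge /=.
case: (eqVneq x1 v) => [_ _|_]; first by exists x2; rewrite eqxx.
by case: (eqVneq x2 v) => [_ _|//]; exists x1; rewrite eqxx orbT.
Qed.

Lemma deg_cons x L v : deg (x :: L) v = ends x v + deg L v.
Proof. exact: big_cons. Qed.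

Lemma deg_rem x L v : x \in L -> deg L v = ends x v + deg (rem x L) v.
Proof. by move=> xL; rewrite /deg (perm_big _ (perm_to_rem xL)) big_cons. Qed.

Lemma deg_gt0_edge L v :
  0 < deg L v -> exists w, exists2 x, x \in L & same_edge (v, w) x.
Proof.
elim: L => [|y L IH]; first by rewrite /deg big_nil.
rewrite deg_cons; case: (posnP (ends y v)) => [-> | /ends_gt0 [w vy] _].
  by move=> /IH [w [x xL vx]]; exists w, x; rewrite // inE xL orbT.
by exists w, y; rewrite ?mem_head.
Qed.

Lemma sum_deg L : \sum_v deg L v = 2 * size L.
Proof.
have sum_eq1 w : \sum_v (w == v) = 1.
  by rewrite (bigD1 w) //= eqxx big1 // => v /negbTE; rewrite eq_sym => ->.
rewrite /deg exchange_big /= (eq_bigr (fun=> 2)); last first.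
  by move=> x _; rewrite big_split /= !sum_eq1.
by rewrite big_const_seq count_predT iter_addn_0 mulnC.
Qed.

Lemma deg_le_eq L L' :
  size L = size L' -> (forall v, deg L v <= deg L' v) -> deg L =1 deg L'.
Proof. by move=> sLL' le; apply: eq_of_leq_sum => //; rewrite !sum_deg sLL'. Qed.

End EdgeMultisets.

Section AlternatingWalks.
Variables (n : nat) (G : rel 'I_n).
Hypothesis G_sym : forall u v : 'I_n, G u v = G v u.
Implicit Types (x t : 'I_n * 'I_n) (L M : seq ('I_n * 'I_n)) (a b c d v : 'I_n).

Definition graph_edge x : bool := G x.1 x.2.

Lemma same_edge_graph x t : same_edge x t -> graph_edge t -> graph_edge x.
Proof.
case: x t => [x1 x2] [t1 t2]; rewrite /same_edge /graph_edge /=.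
by case/orP=> /andP[/eqP-> /eqP->] //; rewrite G_sym.
Qed.

Lemma all_graph_edge_rem t L : all graph_edge L -> all graph_edge (rem t L).
Proof. by move=> /allP LG; apply/allP => x /mem_rem /LG. Qed.

Definition odd_steps (p : nat -> 'I_n) k : seq ('I_n * 'I_n) :=
  [seq (p (2 * l + 1), p (2 * l + 2)) | l <- iota 0 k].

Lemma odd_stepsS p k :
  odd_steps p k.+1 = (p 1, p 2) :: odd_steps (fun r => p r.+2) k.
Proof.
rewrite /odd_steps /= -[iota 1 k]/(iota (1 + 0) k) iotaDl -map_comp.
by congr (_ :: _); apply: eq_map => l /=; congr (p _, p _); lia.
Qed.

(* The walk p_0 p_1 ... p_(2k+1) of G whose odd steps p_(2l+1) p_(2l+2) form,
   up to orientation, a sub-multiset of M; for k = 0 it is a single edge. *)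
Definition alt_walk M a b : Prop :=
  exists k (p : nat -> 'I_n),
    [/\ p 0 = a, p (2 * k + 1) = b,
        forall r, r < 2 * k + 1 -> G (p r) (p r.+1)
      & forall x, count (same_edge x) (odd_steps p k) <= count (same_edge x) M].

Lemma alt_walk_edge M a b : G a b -> alt_walk M a b.
Proof.
exists 0, (fun r => if r is 0 then a else b); split => // r.
by rewrite ltnS leqn0 => /eqP ->.
Qed.

Lemma alt_walk_cons M t a c d b : G a c -> G c d -> t \in M ->
  same_edge (c, d) t -> alt_walk (rem t M) d b -> alt_walk M a b.
Proof.
move=> Gac Gcd tM ct [k [q [q0 qk qG qM]]].
exists k.+1, (fun r => match r with 0 => a | 1 => c | r'.+2 => q r' end).
split=> //.
- by rewrite (_ : 2 * k.+1 + 1 = (2 * k + 1).+2) //; lia.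
- by move=> [|[|r]] hr //=; [rewrite q0 | apply: qG; lia].
- move=> x; rewrite odd_stepsS (count_cons_rem _ tM) /=; apply: leq_add; last exact: qM.
  by rewrite q0 same_edge_sym (same_edge_eq ct) same_edge_sym.
Qed.

Lemma alt_walk_uncons M a b : alt_walk M a b ->
  G a b \/ exists c d, exists2 t, t \in M &
    [/\ G a c, same_edge (c, d) t & alt_walk (rem t M) d b].
Proof.
move=> [[|k] [p [p0 pk pG pM]]].
  by left; rewrite -p0 -pk; exact: pG 0 isT.
right; have [t tM pt] : exists2 t, t \in M & same_edge (p 1, p 2) t.
  apply/hasP; rewrite has_count; apply: leq_trans (pM (p 1, p 2)).
  by rewrite odd_stepsS /= same_edge_refl.
exists (p 1), (p 2), t => //; split => //; first by rewrite -p0; exact: pG 0 isT.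
exists k, (fun r => p r.+2); split => //.
- by rewrite -pk; congr p; lia.
- by move=> r hr; apply: pG; lia.
- move=> x; have := pM x; rewrite odd_stepsS (count_cons_rem _ tM) /=.
  by rewrite same_edge_sym (same_edge_eq pt) same_edge_sym leq_add2l.
Qed.

Lemma alt_walk_cover M a b : all graph_edge M -> alt_walk M a b ->
  exists L, [/\ size L = (size M).+1, all graph_edge L & deg L =1 deg ((a, b) :: M)].
Proof.
move=> MG; have [N] := ubnP (size M); elim: N M MG a => // N IH M MG a ltMN.
case/alt_walk_uncons => [Gab | [c [d [t tM [Gac ct wdb]]]]].
  by exists ((a, b) :: M); split => //=; rewrite MG andbT.
have M0 : 0 < size M by case: (M) tM.
have [||L [sL LG dL]] := IH (rem t M) _ d _ wdb.
- exact: all_graph_edge_rem.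
- by rewrite size_rem // -ltnS prednK.
exists ((a, c) :: L); split => /=.
- by rewrite sL size_rem // prednK.
- by rewrite LG andbT.
- move=> v; rewrite !deg_cons dL deg_cons (deg_rem _ tM) -(same_edge_ends ct).
  by rewrite /ends /=; lia.
Qed.

Lemma cover_alt_walk M L a b : all graph_edge M -> all graph_edge L ->
  size L = (size M).+1 -> deg L =1 deg ((a, b) :: M) -> alt_walk M a b.
Proof.
move=> MG; have [N] := ubnP (size M).
elim: N M MG L a => // N IH M MG L a ltMN LG sL dL.
have [c [f fL af]] : exists c, exists2 f, f \in L & same_edge (a, c) f.
  by apply: deg_gt0_edge; rewrite dL deg_cons /ends /= eqxx.
have Gac : G a c := same_edge_graph af (allP LG f fL).
have dLf v : deg (rem f L) v + (c == v) = (b == v) + deg M v.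
  by have := dL v; rewrite (deg_rem _ fL) -(same_edge_ends af) deg_cons /ends /=; lia.
have [<-|cb] := eqVneq c b; first exact: alt_walk_edge.
have [d [t tM ct]] : exists d, exists2 t, t \in M & same_edge (c, d) t.
  by apply: deg_gt0_edge; have := dLf c; rewrite eqxx eq_sym (negbTE cb); lia.
have Gcd : G c d := same_edge_graph ct (allP MG t tM).
have M0 : 0 < size M by case: (M) tM.
apply: (alt_walk_cons Gac Gcd tM ct); apply: (IH _ _ (rem f L)).
- exact: all_graph_edge_rem.
- by rewrite size_rem // -ltnS prednK.
- exact: all_graph_edge_rem.
- by rewrite !size_rem // sL prednK.
- move=> v; have := dLf v; rewrite deg_cons (deg_rem _ tM) -(same_edge_ends ct).
  by rewrite /ends /=; lia.
Qed.

End AlternatingWalks.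

Section EvenConnection.
Variables (n : nat) (G : rel 'I_n) (s : nat) (e : 'I_s -> 'I_n * 'I_n).

Lemma count_odd_steps (p : nat -> 'I_n) k x :
  count (fun l => same_edge (p (2 * l + 1), p (2 * l + 2)) x) (iota 0 k)
  = count (same_edge x) (odd_steps p k).
Proof. by rewrite count_map; apply: eq_count => l; rewrite /= same_edge_sym. Qed.

Lemma count_edges_card x :
  count (same_edge x) [seq e i | i <- enum 'I_s] = #|[set j | same_edge (e j) x]|.
Proof.
rewrite count_map -count_enum_card; apply: eq_count => j.
by rewrite /= same_edge_sym.
Qed.

Lemma alt_walk_even_connected u v :
  alt_walk G [seq e i | i <- enum 'I_s] u v <-> G u v \/ even_connected G e u v.
Proof.
split.
- case=> [[|k] [p [p0 pk pG pe]]]; first by left; rewrite -p0 -pk; exact: pG 0 isT.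
  right; exists k.+1, p; split=> //; split=> // [l lk|i].
    have : has (same_edge (p (2 * l + 1), p (2 * l + 2))) [seq e i | i <- enum 'I_s].
      rewrite has_count; apply: leq_trans (pe _); rewrite -has_count.
      apply/hasP; exists (p (2 * l + 1), p (2 * l + 2)); last exact: same_edge_refl.
      by apply: map_f; rewrite mem_iota.
    by case/hasP=> _ /mapP [i _ ->]; exists i.
  by rewrite count_odd_steps -count_edges_card.
- case=> [Guv | [k [p [[_ p0 pk] [pe_edge pe pG]]]]]; first exact: alt_walk_edge.
  exists k, p; split=> // x.
  have [-> //|] := posnP (count (same_edge x) (odd_steps p k)).
  rewrite -has_count => /hasP [y /mapP [l]]; rewrite mem_iota => /andP [_ lk] -> xl.
  have [i li] := pe_edge l lk.
  have xi := same_edge_eq (same_edge_trans xl li).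
  by rewrite !(eq_count xi) -count_odd_steps count_edges_card.
Qed.

End EvenConnection.

Local Open Scope ring_scope.

Lemma ideal_gen_sub (K : fieldType) m (S T : {mpoly K[m]} -> Prop) f :
  (forall g, S g -> T g) -> ideal_gen S f -> ideal_gen T f.
Proof. by move=> ST [r [Sr ->]]; exists r; split => // p /Sr /ST. Qed.

Section EdgeIdealPowers.
Variables (K : fieldType) (n : nat) (G : rel 'I_n).
Implicit Types (x : 'I_n * 'I_n) (L M : seq ('I_n * 'I_n)) (u v : 'I_n).
Implicit Types (f g : {mpoly K[n]}).

Definition edges_mnm L : 'X_{1..n} := (\sum_(x <- L) (U_(x.1) + U_(x.2)))%MM.

Lemma edges_mnmE L : edges_mnm L =1 deg L.
Proof. by move=> v; rewrite mnm_sumE; apply: eq_bigr => x _; rewrite mnmDE !mnm1E. Qed.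

Lemma prod_edge_mon L : \prod_(x <- L) edge_mon K x = 'X_[edges_mnm L].
Proof.
elim: L => [|x L IH]; first by rewrite /edges_mnm !big_nil mpolyX0.
by rewrite /edges_mnm !big_cons -/(edges_mnm L) IH /edge_mon !mpolyXD.
Qed.

Lemma ideal_pow_prod_edge_mon L :
  all (graph_edge G) L ->
  ideal_pow (edge_ideal G) (size L) (\prod_(x <- L) edge_mon K x).
Proof.
move=> /allP LG; exists [:: (1, \prod_(x <- L) edge_mon K x)].
split; last by rewrite big_seq1 mul1r.
move=> ?; rewrite inE => /eqP-> /=; exists [seq edge_mon K x | x <- L].
split; first exact: size_map.
split; last by rewrite big_map.
move=> _ /mapP [x /LG Gx ->]; exists [:: (1, edge_mon K x)].
split; last by rewrite big_seq1 mul1r.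
by move=> ?; rewrite inE => /eqP-> /=; exists x.1, x.2.
Qed.

Definition edge_divisible d f : Prop :=
  forall m, m \in msupp f -> exists L,
    [/\ size L = d, all (graph_edge G) L & forall v, (deg L v <= m v)%N].

Lemma edge_divisible0 f : edge_divisible 0 f.
Proof. by move=> m _; exists [::]; split => // v; rewrite /deg big_nil. Qed.

Lemma edge_divisible_sum (I : eqType) d (r : seq I) (F : I -> {mpoly K[n]}) :
  (forall i, i \in r -> edge_divisible d (F i)) -> edge_divisible d (\sum_(i <- r) F i).
Proof.
elim: r => [|i r IH] dF; first by rewrite big_nil => m; rewrite msupp0.
rewrite big_cons => m /msuppD_le; rewrite mem_cat => /orP[|]; first exact/dF/mem_head.
by apply: IH => j jr; apply: dF; rewrite inE jr orbT.
Qed.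

Lemma edge_divisibleM d1 d2 f g :
  edge_divisible d1 f -> edge_divisible d2 g -> edge_divisible (d1 + d2) (f * g).
Proof.
move=> df dg m /msuppM_le /allpairsP [[m1 m2] /= [/df [L1 [s1 G1 le1]]]].
move=> /dg [L2 [s2 G2 le2]] ->; exists (L1 ++ L2); split.
- by rewrite size_cat s1 s2.
- by rewrite all_cat G1 G2.
- by move=> v; rewrite /deg big_cat mnmDE leq_add ?le1 ?le2.
Qed.

Lemma edge_divisible_gen d (S : {mpoly K[n]} -> Prop) f :
  (forall g, S g -> edge_divisible d g) -> ideal_gen S f -> edge_divisible d f.
Proof.
move=> dS [r [Sr ->]]; apply: edge_divisible_sum => p /Sr /dS dp.
by rewrite -[d]add0n; apply: edge_divisibleM; [exact: edge_divisible0 | exact: dp].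
Qed.

Lemma edge_divisible_edge_ideal f : edge_ideal G f -> edge_divisible 1 f.
Proof.
apply: edge_divisible_gen => _ [u [v [Guv ->]]] m; rewrite -mpolyXD msuppX.
rewrite inE => /eqP->; exists [:: (u, v)]; split => //=.
  by rewrite andbT; exact: Guv.
by move=> w; rewrite /deg big_seq1 mnmDE !mnm1E.
Qed.

Lemma edge_divisible_pow d f : ideal_pow (edge_ideal G) d f -> edge_divisible d f.
Proof.
apply: edge_divisible_gen => _ [fs [<- [fsI ->]]].
elim: fs fsI => [|h fs IH] fsI; first exact: edge_divisible0.
rewrite big_cons /= -add1n; apply: edge_divisibleM.
  exact/edge_divisible_edge_ideal/fsI/mem_head.
by apply: IH => g gfs; apply: fsI; rewrite inE gfs orbT.
Qed.

Lemma ideal_pow_edge_walkP M u v :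
  (forall a b, G a b = G b a) -> all (graph_edge G) M ->
  ideal_pow (edge_ideal G) (size M).+1 ('X_u * 'X_v * \prod_(x <- M) edge_mon K x)
  <-> alt_walk G M u v.
Proof.
move=> G_sym MG.
have -> : 'X_u * 'X_v * \prod_(x <- M) edge_mon K x = 'X_[edges_mnm ((u, v) :: M)].
  by rewrite -prod_edge_mon big_cons.
split.
- move=> /edge_divisible_pow /(_ (edges_mnm ((u, v) :: M))).
  rewrite msuppX mem_seq1 eqxx => /(_ isT) [L [sL LG le]].
  apply: (cover_alt_walk G_sym MG LG sL); apply: deg_le_eq => // w.
  by have := le w; rewrite edges_mnmE.
- case/(alt_walk_cover MG) => L [sL LG dL].
  have -> : edges_mnm ((u, v) :: M) = edges_mnm L.
    by apply/mnmP => w; rewrite !edges_mnmE dL.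
  by rewrite -prod_edge_mon -sL; exact: ideal_pow_prod_edge_mon.
Qed.

End EdgeIdealPowers.

Theorem lemma6p11 (K : fieldType) (n : nat) (G : rel 'I_n)
  (G_sym : forall u v : 'I_n, G u v = G v u) (G_irr : forall u : 'I_n, G u u = false)
  (s : nat) (hs : (1 <= s)%N) (e : 'I_s -> 'I_n * 'I_n)
  (he : forall i : 'I_s, G (e i).1 (e i).2) :
  let J := colon (ideal_pow (@edge_ideal K n G) s.+1)
                 (\prod_(i < s) @edge_mon K n (e i)) in
  forall f : {mpoly K[n + n]}, polarization J f <-> @edge_ideal_G' K n s G e f.
Proof.
move=> J f.
have JP u v : J ('X_u * 'X_v) <-> G u v \/ even_connected G e u v.
  have EG : all (graph_edge G) [seq e i | i <- enum 'I_s].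
    by apply/allP => _ /mapP [i _ ->]; exact: he.
  rewrite -alt_walk_even_connected -(ideal_pow_edge_walkP K _ _ G_sym EG).
  by rewrite size_map size_enum_ord big_map big_enum.
split; apply: ideal_gen_sub => g.
- case=> [[u [v [uv /JP [Guv | ec] ->]]] | [u [+ ->]]].
  + by left; exists u, v.
  + by right; left; exists u, v.
  + rewrite expr2 => /JP [|ec]; first by rewrite G_irr.
    by right; right; exists u.
- case=> [[u [v [Guv ->]]] | [[u [v [uv ec ->]]] | [u [ec ->]]]].
  + left; exists u, v; split => //; last by apply/JP; left.
    by apply: contraTneq Guv => ->; rewrite G_irr.
  + by left; exists u, v; split => //; apply/JP; right.
  + by right; exists u; split => //; rewrite expr2; apply/JP; right.
Qed.
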